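(* Let $p,k,q,n$ be positive integers. If there exist a partition of $\{1,\dots,q\}$ into $n$ weakly sum-free subsets and a partition of $\{1,\dots,p\}$ into $k$ sum-free subsets, then there exists a partition of $\{1,\dots, p(q+\lceil q/2\rceil+1)+q\}$ into $n+k$ weakly sum-free subsets.
   Context: A set $A \subseteq \mathbb{N}$ is sum-free if for all $(a,b)\in A^2$ (allowing $a=b$), $a+b \notin A$. A set $B\subseteq\mathbb{N}$ is weakly sum-free if for all $(a,b)\in B^2$ with $a\neq b$, $a+b\notin B$. *)

From mathcomp Require Import all_boot.

(* A partition of {1,...,N} into m (possibly empty) labelled parts is encoded
   by a colouring c : nat -> nat with c x < m for every 1 <= x <= N; the part
   with label i is {x in [1,N] | c x = i}. *)
Definition is_colouring (N m : nat) (c : nat -> nat) : Prop :=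
  forall x, 1 <= x <= N -> c x < m.

Definition sumfree_partition (N m : nat) (c : nat -> nat) : Prop :=
  is_colouring N m c /\
  forall a b, 1 <= a <= N -> 1 <= b <= N -> a + b <= N ->
    c a = c b -> c (a + b) <> c a.

Definition weakly_sumfree_partition (N m : nat) (c : nat -> nat) : Prop :=
  is_colouring N m c /\
  forall a b, 1 <= a <= N -> 1 <= b <= N -> a <> b -> a + b <= N ->
    c a = c b -> c (a + b) <> c a.

Definition ceil_half (q : nat) : nat := (q + 1) %/ 2.

From mathcomp Require Import all_boot zify.

(* Let h = ⌈q/2⌉ and M = q + h + 1.  Inside [1, pM + q] the blocks
   B_J = [JM - h, JM + q - h] (1 <= J <= p) get the new colour n + c2(J);
   every other point is JM + r with r in [1, q] (and r > q - h when J > 0)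
   and gets the old colour c1(r).  Two points of B_I and B_J add up to a
   point of B_(I+J), where sum-freeness of c2 applies, or of one of the two
   gaps beside it, since q <= 2h.  Two points JM + r and J'M + r' of the old
   colour add up either to (J + J')M + (r + r'), of colour c1(r + r') with
   r <> r' because 2r > q as soon as J > 0, or to a point of B_(J+J'+1). *)

Section CombinedColouring.

Variables (p q n k h : nat) (c1 c2 : nat -> nat).

Hypothesis q_gt0 : 0 < q.
Hypothesis h_bounds : q <= 2 * h <= q + 1.

Let M := q + h + 1.

Let M_gt0 : 0 < M. Proof. by rewrite /M addn1. Qed.

Definition combined_colouring (x : nat) : nat :=
  if (q < x) && ((x + h) %% M <= q) then n + c2 ((x + h) %/ M)
  else c1 (x %% M).

Lemma combined_colouring_block {x J s} :
  x + h = J * M + s -> 0 < J -> s <= q -> combined_colouring x = n + c2 J.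
Proof.
move=> Ex J_gt0 s_le_q.
have q_lt_x : q < x by nia.
have s_lt_M : s < M by lia.
rewrite /combined_colouring Ex modnMDl divnMDl // modn_small // divn_small //.
by rewrite q_lt_x s_le_q addn0.
Qed.

Lemma combined_colouring_gap {x J r} :
  x = J * M + r -> 0 < r <= q -> (J = 0 \/ q < r + h) ->
  combined_colouring x = c1 r.
Proof.
move=> Ex r_bounds J_or_r.
have xh_mod : (x + h) %% M = r + h by rewrite Ex -addnA modnMDl modn_small; lia.
rewrite /combined_colouring xh_mod Ex modnMDl modn_small; last lia.
by case: J_or_r => [J0|r_big]; rewrite ifF //; apply/negbTE/nandP; [left|right]; lia.
Qed.

Variant combined_colouring_spec (x : nat) : nat -> Prop :=
  | CombinedBlock J s of x + h = J * M + s & 0 < J <= p & s <= q :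
      combined_colouring_spec x (n + c2 J)
  | CombinedGap J r of x = J * M + r & 0 < r <= q & (J = 0 \/ q < r + h) :
      combined_colouring_spec x (c1 r).

Lemma combined_colouringP {x} :
  1 <= x <= p * M + q -> combined_colouring_spec x (combined_colouring x).
Proof.
move=> x_bounds.
have Exh := divn_eq (x + h) M; have s_lt_M := ltn_pmod (x + h) M_gt0.
move: Exh s_lt_M; set J := (x + h) %/ M; set s := (x + h) %% M => Exh s_lt_M.
have [x_small | x_big] := leqP x q.
  rewrite (combined_colouring_gap (J := 0) (r := x)) //; [|lia|by left].
  by apply: (@CombinedGap x 0 x); [lia|lia|left].
have [s_small | s_big] := leqP s q.
  have J_gt0 : 0 < J by nia.
  have J_le_p : J <= p.
    by rewrite -ltnS -(ltn_pmul2r M_gt0) mulSn; lia.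
  rewrite (combined_colouring_block Exh) //.
  by apply: (@CombinedBlock x J s) => //; rewrite J_gt0.
have Ex : x = J * M + (s - h) by nia.
rewrite (combined_colouring_gap Ex); [|lia|right; lia].
by apply: (@CombinedGap x J (s - h) Ex); [lia|right; lia].
Qed.

Hypothesis c1_wsf : weakly_sumfree_partition q n c1.
Hypothesis c2_sf : sumfree_partition p k c2.

Lemma block_sum_colour {a b Ja sa Jb sb} :
  a + h = Ja * M + sa -> b + h = Jb * M + sb ->
  0 < Ja <= p -> 0 < Jb <= p -> sa <= q -> sb <= q -> a + b <= p * M + q ->
  c2 Ja = c2 Jb -> combined_colouring (a + b) <> n + c2 Ja.
Proof.
move=> Ea Eb Ja_bounds Jb_bounds sa_le_q sb_le_q ab_le c2_eq.
have [c1_col _] := c1_wsf; have [_ c2_free] := c2_sf.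
have [below | not_below] := ltnP (sa + sb) h.
  rewrite (combined_colouring_gap (J := Ja + Jb - 1) (r := q + 1 + sa + sb - h));
    [|nia|lia|right; lia].
  have := c1_col (q + 1 + sa + sb - h); lia.
have [inside | above] := leqP (sa + sb) (q + h).
  rewrite (combined_colouring_block (J := Ja + Jb) (s := sa + sb - h)); [|nia|lia|lia].
  have J_sum_le_p : Ja + Jb <= p.
    by rewrite -ltnS -(ltn_pmul2r M_gt0) mulSn; nia.
  have := c2_free Ja Jb; lia.
rewrite (combined_colouring_gap (J := Ja + Jb) (r := sa + sb - 2 * h));
  [|nia|lia|right; lia].
have := c1_col (sa + sb - 2 * h); lia.
Qed.

Lemma gap_sum_colour {a b Ja ra Jb rb} :
  a = Ja * M + ra -> b = Jb * M + rb -> 0 < ra <= q -> 0 < rb <= q ->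
  (Ja = 0 \/ q < ra + h) -> (Jb = 0 \/ q < rb + h) -> a <> b ->
  c1 ra = c1 rb -> combined_colouring (a + b) <> c1 ra.
Proof.
move=> Ea Eb ra_bounds rb_bounds Ja_or_ra Jb_or_rb a_neq_b c1_eq.
have [c1_col c1_free] := c1_wsf.
have [small | large] := leqP (ra + rb) q.
  have ra_neq_rb : ra <> rb.
    move=> ra_eq_rb; apply: a_neq_b; rewrite Ea Eb ra_eq_rb.
    by case: Ja_or_ra; case: Jb_or_rb; lia.
  rewrite (combined_colouring_gap (J := Ja + Jb) (r := ra + rb)); [|nia|lia|].
    exact: c1_free.
  by case: Ja_or_ra; case: Jb_or_rb; lia.
rewrite (combined_colouring_block (J := Ja + Jb + 1) (s := ra + rb - q - 1));
  [|nia|lia|lia].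
have := c1_col ra; lia.
Qed.

Lemma combined_colouring_weakly_sumfree :
  weakly_sumfree_partition (p * M + q) (n + k) combined_colouring.
Proof.
have [c1_col _] := c1_wsf; have [c2_col _] := c2_sf.
split=> [x /combined_colouringP [J s _ J_bounds _ | J r _ r_bounds _] |].
- have := c2_col J; lia.
- have := c1_col r; lia.
move=> a b a_bounds b_bounds a_neq_b ab_le.
case: (combined_colouringP a_bounds) =>
  [Ja sa Ea Ja_bounds sa_le | Ja ra Ea ra_bounds Ja_or_ra];
case: (combined_colouringP b_bounds) =>
  [Jb sb Eb Jb_bounds sb_le | Jb rb Eb rb_bounds Jb_or_rb].
- by move=> c_eq; apply: (block_sum_colour Ea Eb) => //; lia.
- have := c1_col rb; lia.
- have := c1_col ra; lia.
- by move=> c_eq; apply: (gap_sum_colour Ea Eb).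
Qed.

End CombinedColouring.

Lemma ceil_half_bounds q : q <= 2 * ceil_half q <= q + 1.
Proof. rewrite /ceil_half; lia. Qed.

Theorem theorem3p1 (p k q n : nat) :
  0 < p -> 0 < k -> 0 < q -> 0 < n ->
  (exists c, weakly_sumfree_partition q n c) ->
  (exists c, sumfree_partition p k c) ->
  exists c, weakly_sumfree_partition (p * (q + ceil_half q + 1) + q) (n + k) c.
Proof.
move=> _ _ q_gt0 _ [c1 c1_wsf] [c2 c2_sf].
exists (combined_colouring q n (ceil_half q) c1 c2).
exact: combined_colouring_weakly_sumfree (ceil_half_bounds q) c1_wsf c2_sf.
Qed.
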